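(* Suppose goods are perishable ($d=\infty$) and the inverse hazard rate $v\mapsto(1-F(v))/f(v)$ is non-increasing. Let $w,w'\in[0,1]$ with $w>w'$, and let $(\hat v^w_k)_k,K_w$ and $(\hat v^{w'}_k)_k,K_{w'}$ be the thresholds and maximal queue lengths defined in the context. Then there exists $\bar k\in\{1,2,\dots,\min\{K_{w'},K_w\}\}$ such that $\hat v^w_k\le\hat v^{w'}_k$ for all $k\le\bar k$, and $\hat v^w_k>\hat v^{w'}_k$ for all $k$ with $\bar k+1\le k\le\min\{K_{w'},K_w\}$.
   Context: Goods arrive by a Poisson process with rate $\mu>0$, buyers by an independent Poisson process with rate $\lambda>0$; values are i.i.d. from $F$ on $[0,1]$ with density $f>0$, $f$ absolutely continuous, $J(v)=v-\frac{1-F(v)}{f(v)}$ strictly increasing with $J(0)<0$; waiting cost $c>0$. A planner maximizes seller revenue plus $w\in[0,1]$ times buyers' net surplus; the optimal policy keeps the buyer ranked $k$-th in the queue iff his value is at least $\hat v^w_k$, where the thresholds are defined with the weighted virtual value $J_w(v):=v-(1-w)\frac{1-F(v)}{f(v)}$ as follows. Let $\rho(v):=\lambda[1-F(v)]/\mu$. $\hat v^w_1=J_w^{-1}(c/\mu)$ if $c/\mu<1$ and $\hat v^w_1=1$ otherwise; for $k\ge2$, if $\hat v^w_{k-1}<1$ and $\mu\int_{\hat v^w_{k-1}}^1\frac{J_w'(v)}{1+\rho(v)+\dots+\rho(v)^{k-1}}dv\ge c$, then $\hat v^w_k$ is the unique $x\in(\hat v^w_{k-1},1]$ with $\mu\int_{\hat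 v^w_{k-1}}^{x}\frac{J_w'(v)}{1+\rho(v)+\dots+\rho(v)^{k-1}}dv=c$; otherwise $\hat v^w_k=1$. $K_w$ is the number of $k$ with $\hat v^w_k<1$. *)

From HB Require Import structures.
From mathcomp Require Import all_boot all_order all_algebra.
From mathcomp Require Import all_classical all_reals all_analysis.
Set Implicit Arguments. Unset Strict Implicit. Unset Printing Implicit Defensive.
Import Order.TTheory GRing.Theory Num.Theory.
Import numFieldNormedType.Exports.
Local Open Scope classical_set_scope.
Local Open Scope ring_scope.

Section Queue.
Variable R : realType.

Definition leb := (@lebesgue_measure R).

Definition abs_cont (a b : R) (g : R -> R) : Prop :=
  forall eps : R, 0 < eps -> exists2 delta : R, 0 < delta &
    forall (n : nat) (x y : nat -> R),
      (forall i, (i < n)%N -> a <= x i /\ x i <= y i /\ y i <= b) ->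
      (forall i j, (i < j)%N -> (j < n)%N -> y i <= x j \/ y j <= x i) ->
      \sum_(i < n) (y i - x i) < delta ->
      \sum_(i < n) `|g (y i) - g (x i)| < eps.

Definition Jw (F f : R -> R) (w v : R) : R := v - (1 - w) * ((1 - F v) / f v).

Definition is_Jw_deriv (F f : R -> R) (w : R) (Jpw : R -> R) : Prop :=
  measurable_fun `[0, 1 : R]%classic Jpw /\
  {ae leb, forall v : R, `[0, 1]%classic v -> is_derive v 1 (Jw F f w) (Jpw v)}.

Definition rho (lam mu : R) (F : R -> R) (v : R) : R := lam * (1 - F v) / mu.

Definition integrand (lam mu : R) (F Jpw : R -> R) (k : nat) (v : R) : R :=
  Jpw v / \sum_(i < k) rho lam mu F v ^+ i.

Definition scaled_int (lam mu : R) (F Jpw : R -> R) (k : nat) (a x : R)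
  : \bar R :=
  (mu%:E * \int[leb]_(v in `[a, x]%classic) (integrand lam mu F Jpw k v)%:E)%E.

(* vhat_aux n = \hat v^w_{n+1} *)
Fixpoint vhat_aux (lam mu c : R) (F f : R -> R) (w : R) (Jpw : R -> R)
  (n : nat) : R :=
  match n with
  | 0%N =>
      if `[< c / mu < 1 >] then
        xget 1 [set x : R | 0 <= x <= 1 /\ Jw F f w x = c / mu]
      else 1
  | n'.+1 =>
      let p := vhat_aux lam mu c F f w Jpw n' in
      (* here k = n'.+2 *)
      if `[< p < 1 /\ (c%:E <= scaled_int lam mu F Jpw n'.+2 p 1)%E >] then
        xget 1 [set x : R | p < x <= 1 /\
                            scaled_int lam mu F Jpw n'.+2 p x = c%:E]
      else 1
  end.

(* \hat v^w_k for k >= 1 (the value at k = 0 is meaningless) *)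
Definition vhat (lam mu c : R) (F f : R -> R) (w : R) (Jpw : R -> R)
  (k : nat) : R := vhat_aux lam mu c F f w Jpw k.-1.

Definition is_Kw (lam mu c : R) (F f : R -> R) (w : R) (Jpw : R -> R)
  (K : nat) : Prop :=
  card_eq [set k : nat | (0 < k)%N /\ vhat lam mu c F f w Jpw k < 1] `I_K.

End Queue.

(* Write h = (1 - F)/f, so that J_w = id - (1 - w) h with h nonnegative and
   nonincreasing.  For w' < w, J_w lies above J_w', which gives
   \hat v^w_1 <= \hat v^w'_1, and J_w is flatter: almost everywhere
   0 <= (J_w)' <= (J_w')' and (J_w')' >= 1.  If \hat v^w'_k < \hat v^w_k, the
   integral defining \hat v^w'_(k+1) starts earlier, has the larger integrand and
   gains a positive amount on [\hat v^w'_k, \hat v^w_k), so it reaches c first: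
   \hat v^w'_(k+1) < \hat v^w_(k+1).  Once the order of the two threshold
   sequences flips it therefore stays flipped, and kbar is the last index
   before the flip. *)
From HB Require Import structures.
From mathcomp Require Import all_boot all_order all_algebra.
From mathcomp Require Import all_classical all_reals all_analysis.
From mathcomp Require Import measurable_realfun lra.
Set Implicit Arguments. Unset Strict Implicit. Unset Printing Implicit Defensive.
Import Order.TTheory GRing.Theory Num.Theory.
Import numFieldNormedType.Exports.
Local Open Scope classical_set_scope.
Local Open Scope ring_scope.

(* Instance search does not find the a.e. filter of Lebesgue measure by itself. *)
#[local] Instance leb_ae_filter (R : realType) : Filter (almost_everywhere (@leb R)) :=
  ae_filter_ringOfSetsType _.

Lemma downclosed_card_eq_I (S : set nat) (K : nat) :
  (forall k, S k -> (0 < k)%N) -> (forall k, (0 < k)%N -> S k.+1 -> S k) ->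
  S 1%N -> (S #= `I_K)%card ->
  (0 < K)%N /\ (forall k, (0 < k <= K)%N -> S k).
Proof.
move=> S_gt0 S_pred S1 SK.
have S_down j k : (0 < k <= j)%N -> S j -> S k.
  elim: j => [|j IHj] /andP[k_gt0 kj] Sj; first by rewrite leqNgt k_gt0 in kj.
  have [-> //|kSj] := eqVneq k j.+1.
  have kj' : (k <= j)%N by rewrite -ltnS ltn_neqAle kSj kj.
  by apply: IHj; [rewrite k_gt0 kj' | exact: S_pred (leq_trans k_gt0 kj') Sj].
have card_iota n : (succn @` `I_n #= `I_n)%card by apply: inj_card_eq => a b _ _ [].
split.
  rewrite -card_le_II -(card_le_eqr SK) -(card_le_eql (card_iota 1%N)).
  by apply: subset_card_le => _ [j /= j0 <-]; move: j0; rewrite ltnS leqn0 => /eqP ->.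
move=> k /andP[k_gt0 kK]; apply/not_notP => NSk.
have : (S #<= succn @` `I_k.-1)%card.
  apply: subset_card_le => j Sj; exists j.-1; last by rewrite prednK ?S_gt0.
  rewrite /= -ltnS prednK ?S_gt0 // prednK // ltnNge; apply/negP => kj.
  by apply: NSk; apply: S_down Sj; rewrite k_gt0.
rewrite (card_le_eql SK) (card_le_eqr (card_iota _)) card_le_II => Kk.
by move: (leq_trans kK Kk); rewrite leqNgt ltn_predL k_gt0.
Qed.

Lemma single_crossing {disp : Order.disp_t} {T : orderType disp}
    (a b : nat -> T) (M : nat) :
  (0 < M)%N -> (a 1 <= b 1)%O ->
  (forall k, (0 < k < M)%N -> (b k < a k)%O -> (b k.+1 < a k.+1)%O) ->
  exists kbar, (1 <= kbar <= M)%N /\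
    (forall k, (1 <= k <= kbar)%N -> (a k <= b k)%O) /\
    (forall k, (kbar < k <= M)%N -> (b k < a k)%O).
Proof.
elim: M => [//|[|M] IHM _ ab1 step].
  exists 1%N; split=> //; split=> [k|k /andP[k1 k1']].
    by rewrite -eqn_leq => /eqP <-.
  by rewrite ltnNge k1' in k1.
have step' k : (0 < k < M.+1)%N -> (b k < a k)%O -> (b k.+1 < a k.+1)%O.
  by case/andP=> k0 kM; apply: step; rewrite k0 ltnS ltnW.
have [kbar [/andP[kbar1 kbarM] [le_kbar gt_kbar]]] := IHM isT ab1 step'.
have [kbar_lt|kbar_eq] := ltnP kbar M.+1.
  exists kbar; split; first by rewrite kbar1 ltnW.
  split=> // k /andP[kbar_k kM].
  have [kM'|Mk] := leqP k M.+1; first by apply: gt_kbar; rewrite kbar_k.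
  have -> : k = M.+2 by apply/eqP; rewrite eqn_leq kM Mk.
  by apply: step; [rewrite /= ltnSn | apply: gt_kbar; rewrite kbar_lt leqnn].
have kbarE : kbar = M.+1 by apply/eqP; rewrite eqn_leq kbarM kbar_eq.
rewrite {}kbarE in le_kbar.
have [ab|ba] := leP (a M.+2) (b M.+2).
  exists M.+2; split; first by rewrite /= leqnn.
  split=> [k /andP[k1 kM]|k /andP[Mk kM]]; last by rewrite ltnNge kM in Mk.
  have [kM'|Mk] := leqP k M.+1; first by apply: le_kbar; rewrite k1.
  by have -> : k = M.+2 by apply/eqP; rewrite eqn_leq kM Mk.
exists M.+1; split; first by rewrite /= ltnW.
split=> // k /andP[Mk kM].
by have -> : k = M.+2 by apply/eqP; rewrite eqn_leq kM Mk.
Qed.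

Section RealAnalysis.
Variable R : realType.
Implicit Types (a b : R) (g : R -> R).

Lemma abs_cont_continuous a b g : abs_cont a b g -> {within `[a, b], continuous g}.
Proof.
move=> g_ac; apply/subspace_continuousP => x /= abx; apply/cvgrPdist_lt => e e_gt0.
have [d d_gt0 ac] := g_ac e e_gt0.
have close y z : a <= y -> y <= z -> z <= b -> z - y < d -> `|g z - g y| < e.
  move=> ay yz zb zyd; have := ac 1%N (fun=> y) (fun=> z).
  rewrite !big_ord1; apply => // i j ij; rewrite ltnS leqn0 => /eqP j0.
  by rewrite j0 in ij.
apply/nbhs_ballP; exists d => // y /= xy aby.
move: abx aby xy; rewrite !in_itv /= /ball /= => /andP[ax xb] /andP[ay yb].
have [le_xy|lt_yx] := leP x y.
  by rewrite distrC ger0_norm ?subr_ge0 // => /close; rewrite distrC; apply.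
by rewrite gtr0_norm ?subr_gt0 // => /close; apply => //; exact: ltW.
Qed.

Lemma nondecreasing_is_derive_ge0 a b g (v l : R) :
  a < b -> {in `[a, b] &, {homo g : x y / x <= y}} -> a <= v <= b ->
  is_derive v 1 g l -> 0 <= l.
Proof.
move=> ab g_nd /andP[av vb] [g_cvg <-].
have g_le x y : a <= x -> x <= y -> y <= b -> g x <= g y.
  by move=> ax xy yb; apply: g_nd; rewrite // in_itv /= ?ax ?(le_trans ax xy) ?(le_trans xy yb).
have [vb'|bv] := ltP v b.
  apply: (cvgr_to_ge (cvg_dnbhs_at_right g_cvg)); near=> h.
  have h_gt0 : 0 < h by near: h; exact: nbhs_right_gt.
  have h_lt : h < b - v by near: h; apply: nbhs_right_lt; rewrite subr_gt0.
  rewrite /= scaler1; apply: mulr_ge0; first by rewrite invr_ge0 ltW.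
  by rewrite subr_ge0 g_le //; lra.
apply: (cvgr_to_ge (cvg_dnbhs_at_left g_cvg)); near=> h.
have h_lt0 : h < 0 by near: h; exact: nbhs_left_lt.
have h_gt : a - v < h by near: h; apply: nbhs_left_gt; rewrite subr_lt0; lra.
rewrite /= scaler1; apply: mulr_le0; first by rewrite invr_le0 ltW.
by rewrite subr_le0 g_le //; lra.
Unshelve. all: end_near. Qed.

Lemma ge0_integral_itv_co_ge (a b dl : R) (g : R -> R) :
  a < b -> 0 <= dl -> (forall v, 0 <= g v) -> measurable_fun `[a, b[%classic g ->
  {ae lebesgue_measure, forall v, `[a, b[%classic v -> dl <= g v} ->
  ((dl * (b - a))%:E <= \int[lebesgue_measure]_(v in `[a, b[) (g v)%:E)%E.
Proof.
move=> ab dl_ge0 g_ge0 g_mes g_ge.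
have -> : ((dl * (b - a))%:E = \int[lebesgue_measure]_(v in `[a, b[) (cst dl%:E) v)%E.
  rewrite integral_cst; last exact: measurable_itv.
  have := lebesgue_measure_itv `[a, b[; rewrite /= lte_fin ab => ->.
  by rewrite -EFinD -EFinM.
apply: (@ae_ge0_le_integral _ _ _ lebesgue_measure _ (measurable_itv `[a, b[)
  (fun=> dl%:E) (fun v => (g v)%:E)).
- by move=> v _; rewrite lee_fin.
- exact: measurable_cst.
- by move=> v _; rewrite lee_fin.
- exact/measurable_EFinP.
- by apply: filterS g_ge => v g_ge /g_ge; rewrite lee_fin.
Qed.

Lemma ge0_integral_itv_lt (a b p' p x x' dl : R) (u u' : R -> R) :
  a <= p' -> p' < p -> p <= x -> x <= x' -> x' <= b -> 0 < dl ->
  (forall v, 0 <= u v) -> (forall v, 0 <= u' v) ->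
  measurable_fun `[a, b]%classic u -> measurable_fun `[a, b]%classic u' ->
  {ae lebesgue_measure, forall v, `[a, b]%classic v -> u v <= u' v /\ dl <= u' v} ->
  (\int[lebesgue_measure]_(v in `[p, x]) (u v)%:E)%E \is a fin_num ->
  (\int[lebesgue_measure]_(v in `[p, x]) (u v)%:E < \int[lebesgue_measure]_(v in `[p', x']) (u' v)%:E)%E.
Proof.
move=> ap' p'p px xx' x'b dl_gt0 u_ge0 u'_ge0 u_mes u'_mes uu' u_fin.
have mes (h : R -> R) (A : set R) : measurable_fun `[a, b]%classic h ->
    A `<=` `[p', x']%classic -> measurable_fun A (EFin \o h).
  move=> h_mes A_sub; apply/measurable_EFinP; apply: measurable_funS h_mes => //.
  by apply: subset_trans A_sub _; apply: subset_itvScc; rewrite bnd_simp.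
have px_sub : `[p, x]%classic `<=` `[p', x']%classic.
  by apply: subset_itvScc; rewrite bnd_simp; lra.
have px'_sub : `[p, x']%classic `<=` `[p', x']%classic.
  by apply: subset_itvScc; rewrite bnd_simp; lra.
have p'p_sub : `[p', p[%classic `<=` `[p', x']%classic.
  by apply: subset_itvScc; rewrite bnd_simp; lra.
have in_ab A : A `<=` `[p', x']%classic -> A `<=` `[a, b]%classic.
  by move=> A_sub; apply: subset_trans A_sub _; apply: subset_itvScc; rewrite bnd_simp.
have le_u_u' : (\int[lebesgue_measure]_(v in `[p, x]) (u v)%:E <= \int[lebesgue_measure]_(v in `[p, x]) (u' v)%:E)%E.
  apply: (@ae_ge0_le_integral _ _ _ lebesgue_measure _ (measurable_itv `[p, x])
    (fun v => (u v)%:E) (fun v => (u' v)%:E)).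
  - by move=> v _; rewrite lee_fin.
  - exact: mes.
  - by move=> v _; rewrite lee_fin.
  - exact: mes.
  by apply: filterS uu' => v uu' /(in_ab _ px_sub) /uu' []; rewrite lee_fin.
have le_x_x' : (\int[lebesgue_measure]_(v in `[p, x]) (u' v)%:E <= \int[lebesgue_measure]_(v in `[p, x']) (u' v)%:E)%E.
  apply: ge0_subset_integral; [exact: measurable_itv|exact: measurable_itv| | |].
  - exact: mes.
  - by move=> v _; rewrite lee_fin.
  - by apply: subset_itvl; rewrite bnd_simp.
have split_p : (\int[lebesgue_measure]_(v in `[p', x']) (u' v)%:E =
    \int[lebesgue_measure]_(v in `[p', p[) (u' v)%:E + \int[lebesgue_measure]_(v in `[p, x']) (u' v)%:E)%E.
  have p'x'E : `[p', x']%classic = `[p', p[%classic `|` `[p, x']%classic.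
    by apply: itv_bndbnd_setU; rewrite bnd_simp; lra.
  rewrite p'x'E; apply: (@ge0_integral_setU _ _ _ lebesgue_measure _ _ (measurable_itv _)
    (measurable_itv _) (fun v => (u' v)%:E)).
  - by rewrite -p'x'E; exact: mes.
  - by move=> v _; rewrite lee_fin.
  - apply/disj_set2P; rewrite -subset0 => v /=; rewrite !in_itv /= => -[/andP[_ vp] /andP[pv _]].
    by have := lt_le_trans vp pv; rewrite ltxx.
have lb_p'p : ((dl * (p - p'))%:E <= \int[lebesgue_measure]_(v in `[p', p[) (u' v)%:E)%E.
  apply: ge0_integral_itv_co_ge => //; first exact: ltW.
  - by apply: measurable_funS u'_mes => //; exact: in_ab.
  - by apply: filterS uu' => v uu' /(in_ab _ p'p_sub) /uu' [].
rewrite split_p addeC; apply: lte_spaddre => //.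
- by apply: lt_le_trans lb_p'p; rewrite lte_fin mulr_gt0 // subr_gt0.
- exact: le_trans le_u_u' le_x_x'.
Qed.

Lemma ae_ge0_integral_maxr0 (D : set R) (h : R -> R) :
  measurable D -> measurable_fun D h -> {ae lebesgue_measure, forall v, D v -> 0 <= h v} ->
  (\int[lebesgue_measure]_(v in D) (h v)%:E = \int[lebesgue_measure]_(v in D) (Num.max (h v) 0)%:E)%E.
Proof.
move=> mD h_mes h_ge0; apply: ae_eq_integral => //.
- exact/measurable_EFinP.
- by apply/measurable_EFinP; exact: measurable_maxr.
- by apply: filterS h_ge0 => v h_ge0 /h_ge0 hv; rewrite max_l.
Qed.

Lemma integral_itv_lt (a b p' p x x' dl : R) (u u' : R -> R) :
  a <= p' -> p' < p -> p <= x -> x <= x' -> x' <= b -> 0 < dl ->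
  measurable_fun `[a, b]%classic u -> measurable_fun `[a, b]%classic u' ->
  {ae lebesgue_measure, forall v, `[a, b]%classic v -> [/\ 0 <= u v, u v <= u' v & dl <= u' v]} ->
  (\int[lebesgue_measure]_(v in `[p, x]) (u v)%:E)%E \is a fin_num ->
  (\int[lebesgue_measure]_(v in `[p, x]) (u v)%:E < \int[lebesgue_measure]_(v in `[p', x']) (u' v)%:E)%E.
Proof.
move=> ap' p'p px xx' x'b dl_gt0 u_mes u'_mes uu' u_fin.
have sub_ab s t : a <= s -> t <= b -> `[s, t]%classic `<=` `[a, b]%classic.
  by move=> a_s tb; apply: subset_itvScc; rewrite bnd_simp.
have to_maxr0 s t (h : R -> R) : a <= s -> t <= b -> measurable_fun `[a, b]%classic h ->
    {ae lebesgue_measure, forall v, `[a, b]%classic v -> 0 <= h v} ->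
    (\int[lebesgue_measure]_(v in `[s, t]) (h v)%:E = \int[lebesgue_measure]_(v in `[s, t]) (Num.max (h v) 0)%:E)%E.
  move=> a_s tb h_mes h_ge0; apply: ae_ge0_integral_maxr0; first exact: measurable_itv.
    by apply: measurable_funS h_mes => //; exact: sub_ab.
  by apply: filterS h_ge0 => v h_ge0 /(sub_ab _ _ a_s tb) /h_ge0.
have u_ge0 : {ae lebesgue_measure, forall v, `[a, b]%classic v -> 0 <= u v}.
  by apply: filterS uu' => v uu' /uu' [].
have u'_ge0 : {ae lebesgue_measure, forall v, `[a, b]%classic v -> 0 <= u' v}.
  by apply: filterS uu' => v uu' /uu' [_ _ /(lt_le_trans dl_gt0) /ltW].
have ap : a <= p by lra.
have xb : x <= b by lra.
rewrite (to_maxr0 p x u) // (to_maxr0 p' x' u') // in u_fin *.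
apply: ge0_integral_itv_lt ap' p'p px xx' x'b dl_gt0 _ _ _ _ _ u_fin.
- by move=> v; rewrite le_max lexx orbT.
- by move=> v; rewrite le_max lexx orbT.
- exact: measurable_maxr.
- exact: measurable_maxr.
- apply: filterS uu' => v uu' /uu' [u_ge0' le_uu' dl_u'].
  by rewrite !max_l ?(le_trans u_ge0').
Qed.

Lemma continuous_within_sum_exp (A : set R) (g : R -> R) (n : nat) :
  {within A, continuous g} ->
  {within A, continuous (fun v => \sum_(i < n) g v ^+ i)}.
Proof.
have -> : (fun v => \sum_(i < n) g v ^+ i) = horner (\sum_(i < n) 'X^i) \o g.
  by apply/funext => v; rewrite /= horner_sum; apply: eq_bigr => i _; rewrite hornerXn.
move=> g_cont; apply/subspace_continuousP => x Ax; apply: continuous_cvg.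
  exact: continuous_horner.
exact: (subspace_continuousP _ _).1 g_cont x Ax.
Qed.

End RealAnalysis.

Section Thresholds.
Variables (R : realType) (lam mu c : R) (F f : R -> R).
Hypotheses (lam_gt0 : 0 < lam) (mu_gt0 : 0 < mu).
Hypothesis f_gt0 : forall x : R, 0 <= x <= 1 -> 0 < f x.
Hypothesis F_int : forall x : R, 0 <= x <= 1 -> F x = \int[@leb R]_(t in `[0, x]) f t.
Hypothesis F1 : F 1 = 1.
Hypothesis f_abs_cont : abs_cont 0 1 f.
Hypothesis inv_hazard_noninc : forall x y : R, 0 <= x -> x <= y -> y <= 1 ->
  (1 - F y) / f y <= (1 - F x) / f x.

Local Notation v_aux := (vhat_aux lam mu c F f).

Lemma F_continuous : {within `[0, 1], continuous F}.
Proof.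
have f_int : (@lebesgue_measure R).-integrable `[0, 1] (EFin \o f).
  apply: continuous_compact_integrable; first exact: segment_compact.
  exact: abs_cont_continuous.
apply: subspace_eq_continuous (parameterized_integral_continuous ler01 f_int) => x.
by rewrite inE /= in_itv /= => x01; rewrite /from_subspace /= F_int.
Qed.

Lemma Jw_continuous w : {within `[0, 1], continuous (Jw F f w)}.
Proof.
apply/subspace_continuousP => x x01.
have F_cvg := (subspace_continuousP _ _).1 F_continuous x x01.
have f_cvg := (subspace_continuousP _ _).1 (abs_cont_continuous f_abs_cont) x x01.
have fx_neq0 : f x != 0 by rewrite gt_eqF // f_gt0 //; move: x01; rewrite /= in_itv.
apply: cvgB; first exact: cvg_within.
apply: cvgM; first exact: cvg_cst.
by apply: cvgM; [apply: cvgB => //; exact: cvg_cst | exact: cvgV].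
Qed.

Lemma inv_hazard_ge0 x : 0 <= x <= 1 -> 0 <= (1 - F x) / f x.
Proof.
by case/andP=> x0 x1; have := inv_hazard_noninc x0 x1 (lexx 1); rewrite F1 subrr mul0r.
Qed.

Lemma F_ge0 x : 0 <= x <= 1 -> 0 <= F x.
Proof.
case/andP=> x0 x1; rewrite F_int ?x0 //; apply: Rintegral_ge0 => t /=.
by rewrite in_itv /= => /andP[t0 tx]; rewrite ltW // f_gt0 // t0 (le_trans tx x1).
Qed.

Lemma F_le1 x : 0 <= x <= 1 -> F x <= 1.
Proof.
move=> x01; have := inv_hazard_ge0 x01.
by rewrite pmulr_lge0 ?invr_gt0 ?f_gt0 // subr_ge0.
Qed.

Lemma Jw_le_weight w w' x : w' <= w -> 0 <= x <= 1 -> Jw F f w' x <= Jw F f w x.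
Proof.
move=> w'w x01; have := inv_hazard_ge0 x01; rewrite /Jw => h_ge0.
suff : (1 - w) * ((1 - F x) / f x) <= (1 - w') * ((1 - F x) / f x) by lra.
by apply: ler_wpM2r => //; lra.
Qed.

Lemma scaled_inv_hazard_noninc t x y : 0 <= t -> 0 <= x -> x <= y -> y <= 1 ->
  t * ((1 - F y) / f y) <= t * ((1 - F x) / f x).
Proof. by move=> t0 x0 xy y1; apply: ler_wpM2l => //; exact: inv_hazard_noninc. Qed.

Lemma Jw_lt w x y : w <= 1 -> 0 <= x -> x < y -> y <= 1 -> Jw F f w x < Jw F f w y.
Proof.
move=> w1 x0 xy y1; have : 0 <= 1 - w by lra.
by move/scaled_inv_hazard_noninc => /(_ x y x0 (ltW xy) y1); rewrite /Jw; lra.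
Qed.

Lemma Jw_derive_ae w w' Jpw Jpw' : w' < w -> w <= 1 ->
  is_Jw_deriv F f w Jpw -> is_Jw_deriv F f w' Jpw' ->
  {ae @leb R, forall v, `[0, 1]%classic v -> [/\ 0 <= Jpw v, Jpw v <= Jpw' v & 1 <= Jpw' v]}.
Proof.
move=> w'w w1 [_ dJ] [_ dJ'].
have nondecr (g : R -> R) t : 0 <= t ->
    (forall x y, 0 <= x -> x <= y -> y <= 1 ->
      t * ((1 - F y) / f y) <= t * ((1 - F x) / f x) -> g x <= g y) ->
    {in `[0, 1] &, {homo g : x y / x <= y}}.
  move=> t0 g_le x y; rewrite !in_itv /= => /andP[x0 _] /andP[_ y1] xy.
  exact/g_le/scaled_inv_hazard_noninc.
have sign (g : R -> R) (v l : R) : {in `[0, 1] &, {homo g : x y / x <= y}} ->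
    `[0, 1]%classic v -> is_derive v 1 g l -> 0 <= l.
  by move=> g_nd; rewrite /= in_itv /=; exact: nondecreasing_is_derive_ge0 ltr01 g_nd.
apply: filterS2 dJ dJ' => v {}dJ {}dJ' v01; have {}dJ := dJ v01; have {}dJ' := dJ' v01.
(* J_w, J_w' - J_w and J_w' - id are nondecreasing, being id or 0 plus a
   nonnegative multiple of -h. *)
split.
- apply: sign v01 dJ; apply: (nondecr _ (1 - w)); first lra.
  by move=> x y _ xy _; rewrite /Jw; lra.
- rewrite -subr_ge0; apply: sign v01 (is_deriveB dJ' dJ).
  apply: (nondecr _ (w - w')); first lra.
  by move=> x y _ xy _; rewrite /Jw !fctE; lra.
- rewrite -subr_ge0; apply: sign v01 (is_deriveB dJ' (is_derive_id v 1)).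
  apply: (nondecr _ (1 - w')); first lra.
  by move=> x y _ xy _; rewrite /Jw !fctE; lra.
Qed.

Lemma rho_ge0 v : 0 <= v <= 1 -> 0 <= rho lam mu F v.
Proof.
move=> v01; rewrite /rho !mulr_ge0 ?invr_ge0 ?(ltW mu_gt0) ?(ltW lam_gt0) //.
by rewrite subr_ge0 F_le1.
Qed.

Lemma rho_le v : 0 <= v <= 1 -> rho lam mu F v <= lam / mu.
Proof.
move=> v01; rewrite /rho ler_wpM2r ?invr_ge0 ?(ltW mu_gt0) // ger_pMr //.
by rewrite lerBlDr lerDl F_ge0.
Qed.

Lemma rho_sum_ge1 k v : (0 < k)%N -> 0 <= v <= 1 -> 1 <= \sum_(i < k) rho lam mu F v ^+ i.
Proof.
case: k => // k _ v01; rewrite big_ord_recl expr0 lerDl.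
by apply: sumr_ge0 => i _; rewrite exprn_ge0 ?rho_ge0.
Qed.

Lemma rho_sum_le k v : 0 <= v <= 1 ->
  \sum_(i < k) rho lam mu F v ^+ i <= \sum_(i < k) (lam / mu) ^+ i.
Proof.
move=> v01; apply: ler_sum => i _; apply: lerXn2r; rewrite ?nnegrE ?rho_ge0 ?rho_le //.
by rewrite divr_ge0 ?ltW.
Qed.

Lemma rho_continuous : {within `[0, 1], continuous (rho lam mu F)}.
Proof.
apply/subspace_continuousP => x x01; apply: cvgM; last exact: cvg_cst.
apply: cvgM; first exact: cvg_cst.
apply: cvgB; first exact: cvg_cst.
exact: (subspace_continuousP _ _).1 F_continuous x x01.
Qed.

Lemma integrand_measurable k w Jpw : (0 < k)%N -> is_Jw_deriv F f w Jpw ->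
  measurable_fun `[0, 1 : R]%classic (integrand lam mu F Jpw k).
Proof.
move=> k_gt0 [Jpw_mes _]; apply: measurable_funM Jpw_mes _.
apply: subspace_continuous_measurable_fun; first exact: measurable_itv.
apply/subspace_continuousP => x x01; apply: cvgV.
  have x01' : 0 <= x <= 1 by move: x01; rewrite /= in_itv.
  by rewrite gt_eqF // (lt_le_trans ltr01) // rho_sum_ge1.
apply: (subspace_continuousP _ _).1 x x01.
exact: continuous_within_sum_exp rho_continuous.
Qed.

Lemma integrand_ae k w w' Jpw Jpw' : (0 < k)%N -> w' < w -> w <= 1 ->
  is_Jw_deriv F f w Jpw -> is_Jw_deriv F f w' Jpw' ->
  {ae @leb R, forall v, `[0, 1]%classic v ->
    [/\ 0 <= integrand lam mu F Jpw k v,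
        integrand lam mu F Jpw k v <= integrand lam mu F Jpw' k v &
        (\sum_(i < k) (lam / mu) ^+ i)^-1 <= integrand lam mu F Jpw' k v]}.
Proof.
move=> k_gt0 w'w w1 dJ dJ'.
apply: filterS (Jw_derive_ae w'w w1 dJ dJ') => v Jp_ae v01.
have [Jpw_ge0 Jpw_le Jpw'_ge1] := Jp_ae v01.
have {}v01 : 0 <= v <= 1 by move: v01; rewrite /= in_itv.
have S_ge1 := rho_sum_ge1 k_gt0 v01.
have S_gt0 := lt_le_trans ltr01 S_ge1.
rewrite /integrand; split.
- by rewrite divr_ge0 ?(ltW S_gt0).
- by rewrite ler_wpM2r ?invr_ge0 ?(ltW S_gt0).
- apply: (@le_trans _ _ (\sum_(i < k) rho lam mu F v ^+ i)^-1).
    by rewrite lef_pV2 ?posrE ?rho_sum_le // (lt_le_trans S_gt0) ?rho_sum_le.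
  by rewrite ler_peMl ?invr_ge0 ?(ltW S_gt0).
Qed.

Lemma vhat_aux_in01 w Jpw n : 0 <= v_aux w Jpw n <= 1.
Proof.
elim: n => [|n IHn] /=; case: ifP => _; rewrite ?ler01 ?lexx //.
  by case: xgetP => [x _ []|_]; rewrite ?ler01 ?lexx.
case: xgetP => [x _ [/andP[px ->] _]|_]; rewrite ?ler01 ?lexx // andbT.
by case/andP: IHn => p_ge0 _; rewrite (le_trans p_ge0) ?ltW.
Qed.

Lemma vhat_aux0_spec w Jpw : v_aux w Jpw 0 < 1 ->
  0 <= v_aux w Jpw 0 <= 1 /\ Jw F f w (v_aux w Jpw 0) = c / mu.
Proof.
rewrite /=; case: ifP => _; last by rewrite ltxx.
by case: xgetP => [x _ Px|_]; rewrite ?ltxx.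
Qed.

Lemma vhat_auxS_spec w Jpw n : v_aux w Jpw n.+1 < 1 ->
  [/\ v_aux w Jpw n < 1, v_aux w Jpw n < v_aux w Jpw n.+1 &
      scaled_int lam mu F Jpw n.+2 (v_aux w Jpw n) (v_aux w Jpw n.+1) = c%:E].
Proof.
rewrite /=; case: ifP => [/asboolP[p_lt1 _]|_]; last by rewrite ltxx.
by case: xgetP => [x _ [/andP[px _] x_int] _|_]; rewrite ?ltxx.
Qed.

Lemma vhat_aux0_lt1 w Jpw : 0 <= c -> c < mu -> w <= 1 -> v_aux w Jpw 0 < 1.
Proof.
move=> c_ge0 c_lt_mu w1.
have cmu_lt1 : c / mu < 1 by rewrite ltr_pdivrMr // mul1r.
have J1 : Jw F f w 1 = 1 by rewrite /Jw F1 subrr mul0r mulr0 subr0.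
have J0 : Jw F f w 0 <= 0.
  by rewrite /Jw sub0r oppr_le0 mulr_ge0 ?subr_ge0 // inv_hazard_ge0 // lexx ler01.
have [x x01 Jx] : exists2 x, x \in `[0, 1] & Jw F f w x = c / mu.
  apply: IVT; [exact: ler01 | exact: Jw_continuous |].
  by rewrite J1 ge_min le_max (le_trans J0) ?divr_ge0 ?(ltW mu_gt0) ?(ltW cmu_lt1) ?orbT.
rewrite /=; case: ifP => [_|/asboolPn[]//].
case: xgetP => [y _ [/andP[_ y1] Jy]|/(_ x)[]]; last by move: x01; rewrite in_itv.
rewrite lt_neqAle y1 andbT; apply/eqP => y_eq1.
by move: Jy cmu_lt1; rewrite y_eq1 J1 => <-; rewrite ltxx.
Qed.

Lemma vhat_aux0_le w w' Jpw Jpw' : w' < w -> w <= 1 ->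
  v_aux w Jpw 0 < 1 -> v_aux w' Jpw' 0 < 1 -> v_aux w Jpw 0 <= v_aux w' Jpw' 0.
Proof.
move=> w'w w1 /vhat_aux0_spec[x01 Jx] /vhat_aux0_spec[x'01 Jx'].
rewrite leNgt; apply/negP => x'x.
have := Jw_le_weight (ltW w'w) x01; rewrite Jx -Jx'; apply/negP; rewrite -ltNge.
by apply: Jw_lt x'x _; [lra | case/andP: x'01 | case/andP: x01].
Qed.

Lemma scaled_int_eq k Jpw a x : scaled_int lam mu F Jpw k a x = c%:E ->
  (\int[@leb R]_(v in `[a, x]) (integrand lam mu F Jpw k v)%:E)%E = (c / mu)%:E.
Proof.
rewrite /scaled_int; case: (\int[_]_(_ in _) _)%E => [r||].
- by move=> [<-]; rewrite mulrAC divff ?mul1r ?gt_eqF.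
- by rewrite mulry gtr0_sg // mul1e.
- by rewrite mulrNy gtr0_sg // mul1e.
Qed.

Lemma vhat_auxS_lt w w' Jpw Jpw' n : w' < w -> w <= 1 ->
  is_Jw_deriv F f w Jpw -> is_Jw_deriv F f w' Jpw' ->
  v_aux w Jpw n.+1 < 1 -> v_aux w' Jpw' n.+1 < 1 ->
  v_aux w' Jpw' n < v_aux w Jpw n -> v_aux w' Jpw' n.+1 < v_aux w Jpw n.+1.
Proof.
move=> w'w w1 dJ dJ' /vhat_auxS_spec[_ px /scaled_int_eq Ix].
move=> /vhat_auxS_spec[_ _ /scaled_int_eq Ix'] p'p; rewrite ltNge; apply/negP => xx'.
have /andP[p'_ge0 _] := vhat_aux_in01 w' Jpw' n.
have /andP[_ x'_le1] := vhat_aux_in01 w' Jpw' n.+1.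
have C_gt0 : 0 < (\sum_(i < n.+2) (lam / mu) ^+ i)^-1.
  have one01 : 0 <= (1 : R) <= 1 by rewrite ler01 lexx.
  rewrite invr_gt0 (lt_le_trans ltr01) //.
  exact: le_trans (rho_sum_ge1 _ one01) (rho_sum_le _ one01).
have n2_gt0 : (0 < n.+2)%N by [].
have := integral_itv_lt p'_ge0 p'p (ltW px) xx' x'_le1 C_gt0
  (integrand_measurable n2_gt0 dJ) (integrand_measurable n2_gt0 dJ')
  (integrand_ae n2_gt0 w'w w1 dJ dJ').
by rewrite Ix Ix' ltxx => /(_ isT).
Qed.

Lemma vhat_lt1 w Jpw K : v_aux w Jpw 0 < 1 -> is_Kw lam mu c F f w Jpw K ->
  (0 < K)%N /\ (forall k, (0 < k <= K)%N -> vhat lam mu c F f w Jpw k < 1).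
Proof.
move=> v0 HK; pose S := [set k | (0 < k)%N /\ vhat lam mu c F f w Jpw k < 1].
have S_gt0 k : S k -> (0 < k)%N by case.
have S_pred k : (0 < k)%N -> S k.+1 -> S k.
  by case: k => [//|k] _ [_ /vhat_auxS_spec[]].
have [K_gt0 lt1] := downclosed_card_eq_I S_gt0 S_pred (conj isT v0) HK.
by split => // k kK; case: (lt1 k kK).
Qed.

End Thresholds.

Theorem proposition3 (R : realType) (lam mu c : R) (F f : R -> R)
  (w w' : R) (Jpw Jpw' : R -> R) (Kw Kw' : nat) :
  0 < lam -> 0 < mu -> 0 < c -> c < mu ->
  (* F is a distribution on [0,1] with density f > 0, f absolutely continuous *)
  (forall x : R, 0 <= x <= 1 -> 0 < f x) ->
  (forall x : R, 0 <= x <= 1 -> F x = \int[@leb R]_(t in `[0, x]) f t) ->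
  F 1 = 1 ->
  abs_cont 0 1 f ->
  (* J = J_0 strictly increasing on [0,1] with J(0) < 0 *)
  (forall x y : R, 0 <= x -> x < y -> y <= 1 -> Jw F f 0 x < Jw F f 0 y) ->
  Jw F f 0 0 < 0 ->
  (* inverse hazard rate (1 - F)/f non-increasing on [0,1] *)
  (forall x y : R, 0 <= x -> x <= y -> y <= 1 ->
     (1 - F y) / f y <= (1 - F x) / f x) ->
  (* weights *)
  0 <= w' -> w' < w -> w <= 1 ->
  (* J_w' and J_{w'}' *)
  is_Jw_deriv F f w Jpw -> is_Jw_deriv F f w' Jpw' ->
  (* K_w and K_{w'} *)
  is_Kw lam mu c F f w Jpw Kw -> is_Kw lam mu c F f w' Jpw' Kw' ->
  exists kbar : nat,
    (1 <= kbar <= minn Kw' Kw)%N /\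
    (forall k : nat, (1 <= k <= kbar)%N ->
       vhat lam mu c F f w Jpw k <= vhat lam mu c F f w' Jpw' k) /\
    (forall k : nat, (kbar.+1 <= k <= minn Kw' Kw)%N ->
       vhat lam mu c F f w Jpw k > vhat lam mu c F f w' Jpw' k).
Proof.
(* Monotonicity of J and J(0) < 0 follow from the hazard-rate assumption. *)
move=> lam_gt0 mu_gt0 c_gt0 c_lt_mu f_gt0 F_int F1 f_ac _ _ hazard _ w'w w1 dJ dJ' HK HK'.
have w'1 : w' <= 1 by lra.
have vhat1_lt1 w'' Jpw'' : w'' <= 1 -> vhat_aux lam mu c F f w'' Jpw'' 0 < 1.
  by move=> w''1; apply: vhat_aux0_lt1 => //; exact: ltW.
have [K_gt0 lt1] := vhat_lt1 (vhat1_lt1 _ Jpw w1) HK.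
have [K'_gt0 lt1'] := vhat_lt1 (vhat1_lt1 _ Jpw' w'1) HK'.
apply: (@single_crossing _ _ (vhat lam mu c F f w Jpw) (vhat lam mu c F f w' Jpw')).
- by rewrite leq_min K_gt0 K'_gt0.
- exact: (vhat_aux0_le F1 hazard w'w w1 (vhat1_lt1 _ _ w1) (vhat1_lt1 _ _ w'1)).
- move=> [//|k] /andP[_ kM].
  have kKw : (0 < k.+2 <= Kw)%N by rewrite /= (leq_trans kM) // geq_minr.
  have kKw' : (0 < k.+2 <= Kw')%N by rewrite /= (leq_trans kM) // geq_minl.
  exact: (vhat_auxS_lt lam_gt0 mu_gt0 f_gt0 F_int F1 f_ac hazard w'w w1 dJ dJ'
    (lt1 _ kKw) (lt1' _ kKw')).
Qed.
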